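(* Let $\mathcal C$ be a coalgebra, $g\in\mathcal C$ a group-like element and $\Lambda\in\mathcal C$. If $g\in{}_\Lambda\mathcal V$ then $\dim L^g_{\mathcal V_\Lambda}=1$, and otherwise $\dim L^g_{\mathcal V_\Lambda}=0$. Moreover, an element $\phi\in L^g_{\mathcal V_\Lambda}$ is non-zero if and only if $\phi(\Lambda)\neq0$.
   Context: $k$ is a field; $\mathcal C$ is a coalgebra over $k$ with comultiplication $\Delta$ and dual $\mathcal C'$. A group-like element is a non-zero $g$ with $\Delta(g)=g\otimes g$. A left coideal is a subspace $V$ with $\Delta(V)\subset\mathcal C\otimes V$. For $\Lambda\in\mathcal C$, $\mathcal V_\Lambda=\{(\nu\otimes\mathrm{id})\Delta(\Lambda):\nu\in\mathcal C'\}$ (the smallest left coideal containing $\Lambda$) and ${}_\Lambda\mathcal V=\{(\mathrm{id}\otimes\nu)\Delta(\Lambda):\nu\in\mathcal C'\}$. For a left coideal $V$ and group-like $g$, a $g$-cointegral on $V$ is $\phi\in V'$ with $(\mathrm{id}\otimes\phi)(\Delta(a))=\phi(a)g$ for all $a\in V$; $L^g_V$ denotes the space of $g$-cointegrals on $V$. *)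

From HB Require Import structures.
From mathcomp Require Import all_boot all_order all_algebra.
Set Implicit Arguments. Unset Strict Implicit. Unset Printing Implicit Defensive.
Import GRing.Theory.
Local Open Scope ring_scope.

(* Elements of C ⊗ C are represented by finite formal sums  Σ a_i ⊗ b_i,
   i.e. by sequences of pairs.  Two such sums denote the same tensor iff
   they pair equally with every ν ⊗ μ, ν, μ ∈ C' (over a field the
   functionals ν ⊗ μ separate the points of C ⊗ C). *)
Section Coalg.
Variables (k : fieldType) (C : lmodType k).

Definition lfun (f : C -> k) : Prop :=
  forall (c : k) (x y : C), f (c *: x + y) = c * f x + f y.

Definition tpair (nu mu : C -> k) (t : seq (C * C)) : k :=
  \sum_(p <- t) nu p.1 * mu p.2.

Definition teq (t1 t2 : seq (C * C)) : Prop :=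
  forall nu mu, lfun nu -> lfun mu -> tpair nu mu t1 = tpair nu mu t2.

Record coalgebra (Delta : C -> seq (C * C)) (eps : C -> k) : Prop := {
  coalg_eps_lin : lfun eps;
  coalg_Delta_lin : forall nu mu, lfun nu -> lfun mu ->
    forall (c : k) (x y : C),
      tpair nu mu (Delta (c *: x + y)) =
      c * tpair nu mu (Delta x) + tpair nu mu (Delta y);
  (* (Δ ⊗ id) Δ = (id ⊗ Δ) Δ, tested against ν1 ⊗ ν2 ⊗ ν3 *)
  coalg_coassoc : forall n1 n2 n3, lfun n1 -> lfun n2 -> lfun n3 ->
    forall a : C,
      \sum_(p <- Delta a) tpair n1 n2 (Delta p.1) * n3 p.2 =
      \sum_(p <- Delta a) n1 p.1 * tpair n2 n3 (Delta p.2);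
  coalg_counitl : forall a : C, \sum_(p <- Delta a) eps p.1 *: p.2 = a;
  coalg_counitr : forall a : C, \sum_(p <- Delta a) eps p.2 *: p.1 = a
}.

Definition grouplike (Delta : C -> seq (C * C)) (g : C) : Prop :=
  g != 0 /\ teq (Delta g) [:: (g, g)].

(* 𝒱_Λ = { (ν ⊗ id) Δ(Λ) : ν ∈ C' } *)
Definition VL (Delta : C -> seq (C * C)) (L : C) : C -> Prop :=
  fun x => exists nu, lfun nu /\ x = \sum_(p <- Delta L) nu p.1 *: p.2.

(* _Λ𝒱 = { (id ⊗ ν) Δ(Λ) : ν ∈ C' } *)
Definition LV (Delta : C -> seq (C * C)) (L : C) : C -> Prop :=
  fun x => exists nu, lfun nu /\ x = \sum_(p <- Delta L) nu p.2 *: p.1.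

(* An element of V' is represented by a function C -> k which is linear
   on V; two such functions denote the same element of V' iff they agree
   on V. *)
Definition dual_on (V : C -> Prop) (phi : C -> k) : Prop :=
  forall (c : k) (x y : C), V x -> V y -> phi (c *: x + y) = c * phi x + phi y.

(* φ ∈ L^g_V : φ ∈ V' and (id ⊗ φ)(Δ a) = φ(a) g for all a ∈ V, where
   (id ⊗ φ) is applied to any representative Σ a_i ⊗ b_i of Δ(a) with all
   b_i ∈ V (i.e. a witness of Δ(a) ∈ C ⊗ V). *)
Definition cointegral (Delta : C -> seq (C * C)) (g : C) (V : C -> Prop)
  (phi : C -> k) : Prop :=
  dual_on V phi /\
  forall a, V a -> forall t : seq (C * C),
    teq t (Delta a) -> (forall p, p \in t -> V p.2) ->
    \sum_(p <- t) phi p.2 *: p.1 = phi a *: g.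

Definition nonzero_on (V : C -> Prop) (phi : C -> k) : Prop :=
  exists x, V x /\ phi x != 0.

Definition dim_one (Delta : C -> seq (C * C)) (g : C) (V : C -> Prop) : Prop :=
  exists phi0, cointegral Delta g V phi0 /\ nonzero_on V phi0 /\
    forall phi, cointegral Delta g V phi ->
      exists c : k, forall x, V x -> phi x = c * phi0 x.

Definition dim_zero (Delta : C -> seq (C * C)) (g : C) (V : C -> Prop) : Prop :=
  forall phi, cointegral Delta g V phi -> forall x, V x -> phi x = 0.

End Coalg.

From HB Require Import structures.
From mathcomp Require Import all_boot all_order all_algebra.
From mathcomp Require Import boolp classical_sets.
Set Implicit Arguments. Unset Strict Implicit. Unset Printing Implicit Defensive.
Import GRing.Theory.
Local Open Scope ring_scope.

(* Fix a g-cointegral phi on V_Lambda.  Writing Delta(Lambda)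
   as a tensor whose right legs lie in V_Lambda and applying the defining
   identity of phi to it gives the key formula
       phi((nu (x) id) Delta Lambda) = phi(Lambda) nu(g)      for all nu in C',
   so phi is determined by phi(Lambda) and vanishes iff phi(Lambda) = 0.
   If g = (id (x) mu) Delta(Lambda), coassociativity shows that mu is a
   g-cointegral with mu(Lambda) = eps(g) = 1, whence dim = 1.  If g is not in
   _Lambda V, a functional f vanishing on _Lambda V with f(g) = 1 satisfies
   (f (x) id) Delta Lambda = 0, so phi(Lambda) = phi(Lambda) f(g) = 0: dim = 0. *)

Section LinearAlgebra.
Variables (k : fieldType) (C : lmodType k).

Definition subsp (M : C -> Prop) : Prop :=
  M 0 /\ forall (c : k) x y, M x -> M y -> M (c *: x + y).

Lemma subspZ M c x : subsp M -> M x -> M (c *: x).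
Proof. by move=> [M0 MC] Mx; rewrite -[c *: x]addr0; apply: MC. Qed.

Lemma subspB M x y : subsp M -> M x -> M y -> M (x - y).
Proof. by move=> [M0 MC] Mx My; rewrite -scaleN1r addrC; apply: MC. Qed.

Lemma lfun0 (f : C -> k) : lfun f -> f 0 = 0.
Proof.
move=> lf; have := lf 1 0 0; rewrite scale1r addr0 mul1r => /eqP.
by rewrite -subr_eq subrr eq_sym => /eqP.
Qed.

Lemma lfunD (f : C -> k) x y : lfun f -> f (x + y) = f x + f y.
Proof. by move=> lf; rewrite -{1}[x]scale1r lf mul1r. Qed.

Lemma lfunZ (f : C -> k) c x : lfun f -> f (c *: x) = c * f x.
Proof. by move=> lf; rewrite -[c *: x]addr0 lf lfun0 // addr0. Qed.

Lemma lfunB (f : C -> k) x y : lfun f -> f (x - y) = f x - f y.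
Proof. by move=> lf; rewrite -scaleN1r addrC lf mulN1r addrC. Qed.

Lemma lfun_sum (f : C -> k) (I : Type) (s : seq I) (F : I -> C) :
  lfun f -> f (\sum_(i <- s) F i) = \sum_(i <- s) f (F i).
Proof.
move=> lf; elim: s => [|a s IH]; first by rewrite !big_nil lfun0.
by rewrite !big_cons lfunD // IH.
Qed.

Definition avoiding (U : C -> Prop) (u : C) (A : C -> Prop) : Prop :=
  subsp A /\ (forall x, U x -> A x) /\ ~ A u.

Lemma avoiding_chain_union (U : C -> Prop) (u : C) (F : set (set C)) :
  (forall M x, F M -> M x -> avoiding U u M) ->
  (exists M, F M /\ avoiding U u M) -> total_on F subset ->
  avoiding U u (\bigcup_(M in F) M)%classic.
Proof.
move=> Favoid [M0 [FM0 aM0]] Ftot; have [[M00 _] [UM0 _]] := aM0.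
split; [split|split].
- by exists M0.
- move=> c x y [Mx FMx xMx] [My FMy yMy].
  have [[_ cMx] _] := Favoid _ _ FMx xMx; have [[_ cMy] _] := Favoid _ _ FMy yMy.
  have [sub|sub] := Ftot _ _ FMx FMy.
  + by exists My => //; apply: cMy => //; exact: sub.
  + by exists Mx => //; apply: cMx => //; exact: sub.
- by move=> x Ux; exists M0 => //; apply: UM0.
- by move=> [M FM Mu]; have [_ [_]] := Favoid _ _ FM Mu; apply.
Qed.

(* Zorn's lemma: there is a maximal subspace containing U and avoiding u.
   The empty set is added to the candidates to cover the empty chain. *)
Lemma maximal_avoiding (U : C -> Prop) (u : C) : subsp U -> ~ U u ->
  exists A, avoiding U u A /\ forall B, (A `<` B)%classic -> ~ avoiding U u B.
Proof.
move=> sU nUu.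
pose P : set (set C) := fun M => M = set0 \/ avoiding U u M.
have [A [PA Amax]] : exists A, P A /\ forall B, (A `<` B)%classic -> ~ P B.
  apply: Zorn_bigcup => F FP Ftot.
  have [[M [FM aM]]|noM] := pselect (exists M, F M /\ avoiding U u M); last first.
    left; apply/seteqP; split => x // [M FM Mx]; apply: noM; exists M; split => //.
    by case: (FP M FM) => // M0; move: Mx; rewrite M0.
  right; apply: avoiding_chain_union Ftot; last by exists M.
  by move=> M' x FM' M'x; case: (FP M' FM') => // M'0; move: M'x; rewrite M'0.
have aA : avoiding U u A.
  case: PA => // A0; exfalso; apply: (Amax U); last by right.
  rewrite A0; split => // sub; case: sU => U0 _; exact: (sub 0).
by exists A; split => // B AB aB; apply: (Amax B AB); right.
Qed.

Lemma maximal_avoiding_spans (U A : C -> Prop) (u : C) :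
  avoiding U u A -> (forall B, (A `<` B)%classic -> ~ avoiding U u B) ->
  forall x, exists c, A (x - c *: u).
Proof.
move=> [sA [UA nAu]] Amax x; apply: contrapT => Hn.
(* Otherwise A + k x would be a strictly larger subspace avoiding u. *)
pose B y := exists m d, A m /\ y = m + d *: x.
have [A0 AC] := sA.
apply: (Amax B).
  split; first by move=> m Am; exists m, 0; rewrite scale0r addr0.
  move=> sub; apply: Hn; exists 0; rewrite scale0r subr0; apply: sub.
  by exists 0, 1; rewrite add0r scale1r.
split; [split|split].
- by exists 0, 0; rewrite scale0r addr0.
- move=> c y z [m1 [d1 [Am1 ->]]] [m2 [d2 [Am2 ->]]].
  exists (c *: m1 + m2), (c * d1 + d2); split; first exact: AC.
  by rewrite scalerDr scalerDl scalerA addrACA.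
- by move=> y Uy; exists y, 0; rewrite scale0r addr0; split => //; apply: UA.
- move=> [m [d [Am ud]]].
  have [d0|dn0] := eqVneq d 0.
    by apply: nAu; rewrite ud d0 scale0r addr0.
  apply: Hn; exists d^-1.
  have -> : x - d^-1 *: u = (- d^-1) *: m.
    by rewrite ud scalerDr scalerA mulVf // scale1r opprD addrCA subrr addr0 scaleNr.
  exact: subspZ.
Qed.

Lemma coord_unique (A : C -> Prop) (u x : C) (c d : k) :
  subsp A -> ~ A u -> A (x - c *: u) -> A (x - d *: u) -> c = d.
Proof.
move=> sA nAu Hc Hd; apply: contrapT => cd; apply: nAu.
have : A ((c - d)^-1 *: ((x - d *: u) - (x - c *: u))).
  by apply: subspZ => //; apply: subspB.
have -> : (x - d *: u) - (x - c *: u) = (c - d) *: u.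
  by rewrite scalerBl opprB addrC addrA addrNK.
by rewrite scalerA mulVf ?scale1r // subr_eq0; apply/eqP.
Qed.

(* Separation: a vector outside a subspace U is detected by a linear
   functional vanishing on U (no finiteness assumption, hence Zorn). *)
Lemma separation (U : C -> Prop) (u : C) : subsp U -> ~ U u ->
  exists f, lfun f /\ (forall x, U x -> f x = 0) /\ f u = 1.
Proof.
move=> sU nUu; have [A [aA Amax]] := maximal_avoiding sU nUu.
have span := maximal_avoiding_spans aA Amax.
have [sA [UA nAu]] := aA; have [A0 AC] := sA.
pose f x := proj1_sig (cid (span x)).
have fP x : A (x - f x *: u) by rewrite /f; case: cid.
exists f; split; [|split].
- move=> c x y; apply: (coord_unique sA nAu (fP (c *: x + y))).
  have -> : c *: x + y - (c * f x + f y) *: u =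
            c *: (x - f x *: u) + (y - f y *: u).
    by rewrite scalerDl -scalerA scalerBr opprD addrACA.
  exact: AC.
- move=> x Ux; apply: (coord_unique sA nAu (fP x)).
  by rewrite scale0r subr0; exact: UA.
- by apply: (coord_unique sA nAu (fP u)); rewrite scale1r subrr.
Qed.

Lemma zero_subsp : subsp (fun x : C => x = 0).
Proof. by split => // c x y -> ->; rewrite scaler0 addr0. Qed.

Lemma functional_one (u : C) : u != 0 -> exists f, lfun f /\ f u = 1.
Proof.
move=> u0; have [|f [lf [_ fu]]] := separation zero_subsp (u := u).
  by move/eqP; rewrite (negPf u0).
by exists f.
Qed.

Lemma functionals_separate (u w : C) : (forall nu, lfun nu -> nu u = nu w) -> u = w.
Proof.
move=> H; apply: contrapT => uw.
have [|f [lf [_]]] := separation zero_subsp (u := u - w).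
  by move/eqP; rewrite subr_eq0 => /eqP.
by rewrite lfunB // H // subrr => /eqP; rewrite eq_sym oner_eq0.
Qed.

Lemma finite_rank_identity (s : seq C) :
  exists (n : nat) (nus : nat -> C -> k) (es : nat -> C),
    (forall i, lfun (nus i)) /\
    forall x, x \in s -> \sum_(0 <= i < n) nus i x *: es i = x.
Proof.
elim: s => [|a s [n [nus [es [lnus Hs]]]]].
  exists 0%N, (fun _ _ => 0), (fun _ => 0).
  by split => // i c x y; rewrite mulr0 addr0.
pose P x := \sum_(0 <= i < n) nus i x *: es i.
pose r := a - P a.
have [r0|rn0] := eqVneq r 0.
  exists n, nus, es; split => // x; rewrite in_cons => /orP[/eqP ->|]; last exact: Hs.
  by apply/eqP; rewrite eq_sym -subr_eq0 -/r r0.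
(* Add the rank-one correction h(x) r, where h = f o (id - P) and f(r) = 1. *)
have [f [lf fr]] := functional_one rn0.
pose h x := f x - \sum_(0 <= i < n) nus i x * f (es i).
have hP x : h x = f (x - P x).
  by rewrite /h lfunB // lfun_sum //; congr (_ - _); apply: eq_bigr => i _; rewrite lfunZ.
have lh : lfun h.
  move=> c x y; rewrite /h lf mulrBr addrACA -opprD mulr_sumr -big_split /=.
  by congr (_ - _); apply: eq_bigr => i _; rewrite lnus mulrDl mulrA.
exists n.+1, (fun i => if i == n then h else nus i), (fun i => if i == n then r else es i).
split; first by move=> i; case: eqP.
move=> x xin; rewrite big_nat_recr //= eqxx.
rewrite (@eq_big_nat _ _ _ _ _ _ (fun i => nus i x *: es i)); last first.
  by move=> i /andP[_ /ltn_eqF ->].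
rewrite -/(P x) hP; move: xin; rewrite in_cons => /orP[/eqP ->|xs].
  by rewrite -/r fr scale1r /r addrC subrK.
by rewrite /P Hs // subrr lfun0 // scale0r addr0.
Qed.

Lemma contract_left (nu mu : C -> k) (t : seq (C * C)) :
  lfun nu -> nu (\sum_(p <- t) mu p.1 *: p.2) = tpair mu nu t.
Proof. by move=> lnu; rewrite lfun_sum //; apply: eq_bigr => p _; rewrite lfunZ. Qed.

Lemma contract_right (nu mu : C -> k) (t : seq (C * C)) :
  lfun nu -> nu (\sum_(p <- t) mu p.2 *: p.1) = tpair nu mu t.
Proof.
by move=> lnu; rewrite lfun_sum //; apply: eq_bigr => p _; rewrite lfunZ // mulrC.
Qed.

Lemma contract_teq (nu : C -> k) (s t : seq (C * C)) : lfun nu -> teq t s ->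
  \sum_(p <- s) nu p.1 *: p.2 = \sum_(p <- t) nu p.1 *: p.2.
Proof.
by move=> lnu ts; apply: functionals_separate => mu lmu; rewrite !contract_left // ts.
Qed.

Lemma tensor_rep (s : seq (C * C)) : exists t : seq (C * C), teq t s /\
  forall p, p \in t -> exists nu, lfun nu /\ p.2 = \sum_(q <- s) nu q.1 *: q.2.
Proof.
have [n [nus [es [lnus Hs]]]] := finite_rank_identity [seq q.1 | q <- s].
exists [seq (es i, \sum_(q <- s) nus i q.1 *: q.2) | i <- index_iota 0 n].
split; last by move=> p /mapP[i _ ->]; exists (nus i).
move=> al be lal lbe; rewrite /tpair big_map /=.
under eq_bigr => i _ do rewrite contract_left // /tpair mulr_sumr.
rewrite exchange_big /=; apply: eq_big_seq => q qin.
rewrite -{2}(Hs q.1 (map_f _ qin)) lfun_sum // mulr_suml.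
by apply: eq_bigr => i _; rewrite lfunZ // mulrA (mulrC (al _)).
Qed.

Lemma contractions_subsp (I : Type) (s : seq I) (a b : I -> C) :
  subsp (fun x => exists nu, lfun nu /\ x = \sum_(i <- s) nu (a i) *: b i).
Proof.
split.
  exists (fun _ => 0); split; first by move=> c x y; rewrite mulr0 addr0.
  by rewrite big1 // => i _; rewrite scale0r.
move=> c x y [nu [lnu ->]] [mu [lmu ->]].
exists (fun z => c * nu z + mu z); split.
  by move=> d u w; rewrite lnu lmu mulrDr mulrCA addrACA -mulrDr.
rewrite scaler_sumr -big_split /=; apply: eq_bigr => i _.
by rewrite scalerDl scalerA.
Qed.

Lemma dual_on0 (V : C -> Prop) (phi : C -> k) : subsp V -> dual_on V phi -> phi 0 = 0.
Proof.
move=> [V0 _] dphi; have := dphi 1 0 0 V0 V0.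
by rewrite scale1r addr0 mul1r => /eqP; rewrite -subr_eq subrr eq_sym => /eqP.
Qed.

Lemma dual_on_sum (V : C -> Prop) (phi : C -> k) (I : eqType) (s : seq I)
    (c : I -> k) (v : I -> C) :
  subsp V -> dual_on V phi -> (forall i, i \in s -> V (v i)) ->
  V (\sum_(i <- s) c i *: v i) /\
  phi (\sum_(i <- s) c i *: v i) = \sum_(i <- s) c i * phi (v i).
Proof.
move=> sV dphi; have [V0 VC] := sV; elim: s => [|a s IH] Vs.
  by rewrite !big_nil (dual_on0 sV dphi).
have [Vsum psum] := IH (fun i si => Vs i (mem_behead (s := a :: s) si)).
have Va : V (v a) by apply: Vs; rewrite mem_head.
by rewrite !big_cons; split; [apply: VC | rewrite dphi // psum].
Qed.

End LinearAlgebra.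

Section Cointegrals.
Variables (k : fieldType) (C : lmodType k).
Variables (Delta : C -> seq (C * C)) (eps : C -> k).
Hypothesis HC : coalgebra Delta eps.
Variables g L : C.

Lemma tpair_Delta_sum (nu mu : C -> k) (I : Type) (s : seq I) (c : I -> k) (v : I -> C) :
  lfun nu -> lfun mu ->
  tpair nu mu (Delta (\sum_(i <- s) c i *: v i)) =
  \sum_(i <- s) c i * tpair nu mu (Delta (v i)).
Proof.
move=> lnu lmu; have DeltaL := coalg_Delta_lin HC lnu lmu.
elim: s => [|a s IH]; last by rewrite !big_cons DeltaL IH.
have := DeltaL 1 0 0; rewrite !big_nil scale1r addr0 mul1r => /eqP.
by rewrite -subr_eq subrr eq_sym => /eqP.
Qed.

Lemma grouplike_tpair (nu mu : C -> k) : grouplike Delta g -> lfun nu -> lfun mu ->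
  tpair nu mu (Delta g) = nu g * mu g.
Proof. by move=> [_ gD] lnu lmu; rewrite gD // /tpair big_cons big_nil addr0. Qed.

Lemma counit_grouplike : grouplike Delta g -> eps g = 1.
Proof.
move=> Hg; have [f [lf fg]] := functional_one Hg.1.
have := contract_right eps (Delta g) lf.
rewrite (coalg_counitr HC) grouplike_tpair //; last exact: coalg_eps_lin HC.
by rewrite fg mul1r => <-.
Qed.

Lemma VL_subsp : subsp (VL Delta L).
Proof. exact: (contractions_subsp (Delta L) fst snd). Qed.

Lemma LV_subsp : subsp (LV Delta L).
Proof. exact: (contractions_subsp (Delta L) snd fst). Qed.

(* Lambda = (eps (x) id) Delta(Lambda) lies in V_Lambda. *)
Lemma L_in_VL : VL Delta L L.
Proof. by exists eps; split; [exact: coalg_eps_lin HC | rewrite (coalg_counitl HC)]. Qed.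

(* Apply the
   cointegral identity to a representative of Delta(Lambda) in C (x) V_Lambda. *)
Lemma cointegral_eval (phi nu : C -> k) :
  cointegral Delta g (VL Delta L) phi -> lfun nu ->
  phi (\sum_(p <- Delta L) nu p.1 *: p.2) = phi L * nu g.
Proof.
move=> [dphi Hphi] lnu; have [t [tD tV]] := tensor_rep (Delta L).
have phiL := Hphi L L_in_VL t tD tV.
rewrite (contract_teq lnu tD).
have [_ ->] := dual_on_sum (fun p => nu p.1) VL_subsp dphi tV.
by rewrite -lfunZ // -phiL contract_right.
Qed.

Lemma cointegral_vanish (phi : C -> k) :
  cointegral Delta g (VL Delta L) phi -> phi L = 0 ->
  forall x, VL Delta L x -> phi x = 0.
Proof. by move=> cphi phiL0 x [nu [lnu ->]]; rewrite cointegral_eval // phiL0 mul0r. Qed.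

Lemma cointegral_proportional (phi psi : C -> k) (x : C) :
  cointegral Delta g (VL Delta L) phi -> cointegral Delta g (VL Delta L) psi ->
  VL Delta L x -> phi L * psi x = psi L * phi x.
Proof.
move=> cphi cpsi [nu [lnu ->]].
by rewrite (cointegral_eval cphi lnu) (cointegral_eval cpsi lnu) mulrCA.
Qed.

(* If g = (id (x) mu) Delta(Lambda), then mu is a g-cointegral on V_Lambda;
   this is where coassociativity enters. *)
Lemma cointegral_from_LV (mu : C -> k) : grouplike Delta g -> lfun mu ->
  g = \sum_(p <- Delta L) mu p.2 *: p.1 -> cointegral Delta g (VL Delta L) mu.
Proof.
move=> Hg lmu gE; split; first by move=> c x y _ _; apply: lmu.
move=> _ [al [lal ->]] t tD _; apply: functionals_separate => nu lnu.
have muX : mu (\sum_(p <- Delta L) al p.1 *: p.2) = al g.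
  by rewrite contract_left // gE contract_right.
rewrite contract_right // tD // tpair_Delta_sum // lfunZ // muX.
rewrite -(coalg_coassoc HC lal lnu lmu) -grouplike_tpair // {1}gE tpair_Delta_sum //.
by apply: eq_bigr => p _; rewrite mulrC.
Qed.

Lemma LV_functional_at_L (mu : C -> k) : lfun mu ->
  g = \sum_(p <- Delta L) mu p.2 *: p.1 -> mu L = eps g.
Proof.
move=> lmu gE; have lep := coalg_eps_lin HC.
by rewrite gE contract_right // -contract_left // (coalg_counitl HC).
Qed.

(* If g is not in _Lambda V, every g-cointegral on V_Lambda vanishes at
   Lambda: a functional f with f = 0 on _Lambda V and f(g) = 1 has
   (f (x) id) Delta(Lambda) = 0. *)
Lemma cointegral_L_notLV (phi : C -> k) : ~ LV Delta L g ->
  cointegral Delta g (VL Delta L) phi -> phi L = 0.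
Proof.
move=> nLV cphi; have [f [lf [fLV fg]]] := separation LV_subsp nLV.
have Xf0 : \sum_(p <- Delta L) f p.1 *: p.2 = 0.
  apply: functionals_separate => mu lmu.
  by rewrite contract_left // -contract_right // fLV ?lfun0 //; exists mu.
have := cointegral_eval cphi lf; rewrite Xf0 fg mulr1 => <-.
exact: dual_on0 VL_subsp cphi.1.
Qed.

End Cointegrals.

Theorem mainTheorem14 (k : fieldType) (C : lmodType k)
  (Delta : C -> seq (C * C)) (eps : C -> k)
  (HC : coalgebra Delta eps) (g L : C) (Hg : grouplike Delta g) :
  (LV Delta L g -> dim_one Delta g (VL Delta L)) /\
  (~ LV Delta L g -> dim_zero Delta g (VL Delta L)) /\
  (forall phi : C -> k, cointegral Delta g (VL Delta L) phi ->
     (nonzero_on (VL Delta L) phi <-> phi L != 0)).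
Proof.
split; [|split].
- move=> [mu [lmu gE]].
  have cmu := cointegral_from_LV HC Hg lmu gE.
  have muL : mu L = 1 by rewrite (LV_functional_at_L HC lmu gE) (counit_grouplike HC Hg).
  exists mu; split => //; split.
    by exists L; rewrite muL oner_eq0; split => //; exact: (L_in_VL HC L).
  move=> phi cphi; exists (phi L) => x Vx.
  by rewrite -[phi x]mul1r -muL -(cointegral_proportional HC cphi cmu Vx).
- move=> nLV phi cphi x Vx.
  exact: (cointegral_vanish HC cphi (cointegral_L_notLV HC nLV cphi) Vx).
- move=> phi cphi; split.
    by move=> [x [Vx]]; apply: contra => /eqP phiL0; apply/eqP; exact: (cointegral_vanish HC cphi phiL0 Vx).
  by move=> nz; exists L; split => //; exact: (L_in_VL HC L).
Qed.
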